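(* Let $\Omega$ be a measure space and $Z:=L^2(\Omega)$. Let $(a^k)$ and $(b^k)$ be bounded sequences in $Z$. If $\min\{a^k,b^k\}\to 0$ in $Z$, then $\langle a^k,b^k\rangle\to 0$.
   Context: $\min\{a,b\}$ denotes the pointwise minimum of $a,b\in Z$, and $\langle\cdot,\cdot\rangle$ is the inner product of $L^2(\Omega)$. *)

From HB Require Import structures.
From mathcomp Require Import all_boot all_order all_algebra.
From mathcomp Require Import all_classical all_reals all_analysis.
Set Implicit Arguments. Unset Strict Implicit. Unset Printing Implicit Defensive.
Import Order.TTheory GRing.Theory Num.Theory.
Local Open Scope classical_set_scope.
Local Open Scope ring_scope.

(* f belongs to Z = L^2(Omega, mu): measurable with finite L^2 norm
   (elements of L^2 are represented by square-integrable representatives). *)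
Definition inL2 d (T : measurableType d) (R : realType)
  (mu : {measure set T -> \bar R}) (f : T -> R) : Prop :=
  measurable_fun setT f /\ (Lnorm mu 2%:E (EFin \o f) < +oo)%E.

Definition L2norm d (T : measurableType d) (R : realType)
  (mu : {measure set T -> \bar R}) (f : T -> R) : \bar R :=
  Lnorm mu 2%:E (EFin \o f).

Definition L2inner d (T : measurableType d) (R : realType)
  (mu : {measure set T -> \bar R}) (f g : T -> R) : R :=
  Rintegral mu setT (fun x => f x * g x)%R.

From HB Require Import structures.
From mathcomp Require Import all_boot all_order all_algebra.
From mathcomp Require Import all_classical all_reals all_analysis.
From mathcomp Require Import measurable_realfun.
Set Implicit Arguments. Unset Strict Implicit. Unset Printing Implicit Defensive.
Import Order.TTheory GRing.Theory Num.Theory.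
Local Open Scope classical_set_scope.
Local Open Scope ring_scope.

(* Pointwise, x y = min(x, y) max(x, y) and |max(x, y)| <= |x| + |y|, so
   |x y| <= |min(x, y)| (|x| + |y|).  Integrating and applying Cauchy-Schwarz
   gives |<a, b>| <= ||min(a, b)|| (||a|| + ||b||), and the right-hand side is
   a null sequence times a bounded one. *)

Lemma normrM_le_min (R : realDomainType) (x y : R) :
  `|x * y| <= `|Order.min x y| * (`|x| + `|y|).
Proof.
rewrite normrM; case: (leP x y) => _.
- by rewrite ler_wpM2l // lerDr.
- by rewrite mulrC ler_wpM2l // lerDl.
Qed.

Lemma normr_fine_le (R : numDomainType) (x : \bar R) (c : R) :
  (`|x| <= c%:E)%E -> `|fine x| <= c.
Proof. by case: x => [r | |] //=; rewrite lee_fin. Qed.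

Section L2_inner_min.
Context d (T : measurableType d) (R : realType) (mu : {measure set T -> \bar R}).
Local Open Scope ereal_scope.

Lemma L2_cauchy_schwarz (f g : T -> R) :
  measurable_fun setT f -> measurable_fun setT g ->
  \int[mu]_x `|f x * g x|%:E <= L2norm mu f * L2norm mu g.
Proof.
move=> mf mg.
have := @hoelder _ _ _ mu _ _ 2 2 mf mg; rewrite Lnorm1; apply => //.
by rewrite -div1r -splitr.
Qed.

Lemma abse_integralM_le_L2norm_min (f g : T -> R) :
  measurable_fun setT f -> measurable_fun setT g ->
  `|\int[mu]_x (f x * g x)%:E| <=
  L2norm mu (fun x => Order.min (f x) (g x)) * (L2norm mu f + L2norm mu g).
Proof.
move=> mf mg; set m := fun x => Order.min (f x) (g x).
have mm : measurable_fun setT m by exact: measurable_minr.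
have mabsM h : measurable_fun setT h ->
    measurable_fun setT (fun x => `|m x * h x|%:E).
  by move=> mh; do 2 apply: measurableT_comp => //; exact: measurable_funM.
rewrite ge0_muleDr ?Lnorm_ge0//.
apply: le_trans _ (leeD (L2_cauchy_schwarz mm mf) (L2_cauchy_schwarz mm mg)).
rewrite -ge0_integralD//; [|exact: mabsM..].
apply: le_trans (le_abse_integral _ _ _) _ => //.
  by apply/measurable_EFinP; exact: measurable_funM.
apply: ge0_le_integral => //.
- by apply: measurableT_comp => //; apply/measurable_EFinP; exact: measurable_funM.
- exact: emeasurable_funD (mabsM _ mf) (mabsM _ mg).
- by move=> x _ /=; rewrite -EFinD lee_fin (le_trans (normrM_le_min _ _))// mulrDr !normrM.
Qed.

Lemma normr_L2inner_le_min (f g : T -> R) (A B : R) :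
  measurable_fun setT f -> measurable_fun setT g ->
  L2norm mu (fun x => Order.min (f x) (g x)) \is a fin_num ->
  L2norm mu f <= A%:E -> L2norm mu g <= B%:E ->
  (`|L2inner mu f g| <= fine (L2norm mu (fun x => Order.min (f x) (g x))) * (A + B))%R.
Proof.
move=> mf mg Nfin fA gB; apply: normr_fine_le.
apply: le_trans (abse_integralM_le_L2norm_min mf mg) _.
by rewrite EFinM fineK// lee_wpmul2l ?Lnorm_ge0// EFinD leeD.
Qed.

End L2_inner_min.

Theorem lemma2p2 (d : measure_display) (T : measurableType d) (R : realType)
  (mu : {measure set T -> \bar R}) (a b : nat -> T -> R) :
  (forall k, inL2 mu (a k)) -> (forall k, inL2 mu (b k)) ->
  (exists M : R, forall k, (L2norm mu (a k) <= M%:E)%E) ->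
  (exists M : R, forall k, (L2norm mu (b k) <= M%:E)%E) ->
  (fun k => L2norm mu (fun x => Order.min (a k x) (b k x))) @ \oo --> 0%E ->
  (fun k => L2inner mu (a k) (b k)) @ \oo --> 0%R.
Proof.
move=> La Lb [A aA] [B bB].
set N := fun k => L2norm mu _ => /fine_cvgP[Nfin N0].
have bound0 : fine (N k) * (A + B) @[k --> \oo] --> 0.
  by rewrite -(mul0r (A + B)); exact: (cvgM N0 (cvg_cst (A + B))).
apply: (@squeeze_cvgr _ _ _ _ (fun k => - (fine (N k) * (A + B))) _ _ _ _ _ bound0).
- near=> k; rewrite -ler_norml.
  by apply: normr_L2inner_le_min => //; [exact: (La k).1 | exact: (Lb k).1 | near: k].
- by rewrite -oppr0; exact: cvgN.
Unshelve. all: by end_near.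
Qed.
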